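(* Let $F\in Sh^{s,0}_{\Lambda_L}(X)\cap Mod(X)$ be reduced, given by data $(V,\rho,W_s,\rho_s,T_s)$, and let $R$ be the matrix of standard cord values of $\epsilon_F=\epsilon_{(F,f)}$ for a local trivialization $f$. (1) If $\rho(m_s)=\mathrm{id}_V$ for the meridian $m_s$ of $K_s$, then $R_j=0$ for all $j$ with $\{j\}=s$. (2) If $F$ is stable, then $R^i\neq0$ for all $1\le i\le n$.
   Context: $X=\mathbb{R}^3$ or $S^3$, $k$ a field, $(L,L')$ an $r$-component framed oriented link, $L=K_1\sqcup\dots\sqcup K_r$, $\pi_L=\pi_1(X\setminus L)$. $L$ is the closure of an $n$-strand braid $B$; a disk $D$ transverse to the braid meets $L$ at $y_1,\dots,y_n$ and the framing at $x_1,\dots,x_n$; strand $i$ lies on component $K_{\{i\}}$. The standard cord $\gamma_{ij}$ is the straight segment in $D$ from $x_i$ to $x_j$; for an augmentation $\epsilon$ of the framed cord algebra, $R$ is the $n\times n$ matrix $R_{ij}=\epsilon(\gamma_{ij})$, with columns $R_j$ and rows $R^i$. Sheaves in $Sh^{s,0}_{\Lambda_L}(X)\cap Mod(X)$ (sheaves of $k$-vector spaces with micro-support at infinity in the unit conormal of $L$, microlocally simple with Morse cone in degree $0$) are equivalent to data $(V,\rho,W_s,\rho_s,T_s)$: $\rho:\pi_L\to GL(V)$ the local system on the complement, $W_s$ the stalk on $K_s$, $T_s:W_s\to V$ injective with one-dimensional cokernel (meridian of $K_s$ acting trivially on its image, longitude compatible with the monodromy of $K_s$); we view $W_s\subset V$;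 stalks at the $x_i$ are identified with $V$ via the standard cords, and $W_i\subset V$ denotes the stalk at $y_i$. $F$ is reduced if it admits no nonzero locally constant subsheaf, no nonzero locally constant quotient, and no direct summand that is the kernel of a surjection from a nonzero locally constant sheaf onto $i'_*k_{L''}$ for a sublink $L''$. With $V_0=\sum_t\mathrm{im}(\mathrm{id}_V-\rho(m_t))$ (sum over meridian generators) and $F_0\subset F$ the subsheaf with data $(V_0,\rho|_{V_0},W_s\cap V_0,\dots)$, $F$ is stable if $\Gamma(X,F)=0$ and $F=F_0$. A local trivialization is a tuple of surjections $f_i:V\to k$ with $\ker f_i\supseteq W_i$; $\epsilon_{(F,f)}(\gamma_{ij})=f_i\circ(\mathrm{id}_V-\rho(m_j))\circ f_j^{-1}$ with $f_j^{-1}$ a right inverse of $f_j$ and $m_j$ the meridian of strand $j$ at $x_j$ (more generally $\epsilon(c_{st})=f_sA_{c_{st}}(\mathrm{id}_V-M_t)f_t^{-1}$, $\epsilon(\lambda_s)=f_sA_{\ell_s}f_s^{-1}$, $\epsilon(\mu_s)=1-f_s(\mathrm{id}_V-M_s)f_s^{-1}$). *)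

(* Algebraic ("data") model of the sheaves of the paper,
   following the equivalence F <-> (V, rho, W_s, rho_s, T_s) stated in the
   context, with the link group presented through the braid B. *)
From HB Require Import structures.
From mathcomp Require Import all_boot all_order all_algebra.
Set Implicit Arguments. Unset Strict Implicit. Unset Printing Implicit Defensive.
Import GRing.Theory.
Local Open Scope ring_scope.

(* A letter (j, b) is x_j if b = false and x_j^{-1} if b = true. *)
Definition fword := seq (nat * bool).

Definition winv (w : fword) : fword := rev (map (fun p => (p.1, ~~ p.2)) w).

(* A "conjugate generator" (c, l) stands for the element c^{-1} x_l c. *)
Definition conj_word (p : fword * nat) : fword := winv p.1 ++ (p.2, false) :: p.1.

(* Images of the generators under the Artin automorphism of the braid
   generator sigma_a (inv = false) or sigma_a^{-1} (inv = true):
   sigma_a     : x_a |-> x_a x_{a+1} x_a^{-1},  x_{a+1} |-> x_a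
   sigma_a^{-1}: x_a |-> x_{a+1},  x_{a+1} |-> x_{a+1}^{-1} x_a x_{a+1}. *)
Definition sigma_img (a : nat) (inv : bool) (j : nat) : fword * nat :=
  if ~~ inv then
    if j == a then ([:: (a, true)], a.+1)
    else if j == a.+1 then ([::], a)
    else ([::], j)
  else
    if j == a then ([::], a.+1)
    else if j == a.+1 then ([:: (a.+1, false)], a)
    else ([::], j).

Definition subst_word (img : nat -> fword * nat) (w : fword) : fword :=
  flatten (map (fun p => if p.2 then winv (conj_word (img p.1))
                         else conj_word (img p.1)) w).

Definition subst_conj (img : nat -> fword * nat) (p : fword * nat) : fword * nat :=
  let q := img p.2 in (q.1 ++ subst_word img p.1, q.2).

(* A braid is a word in the Artin generators: (a, false) = sigma_a,
   (a, true) = sigma_a^{-1}.  [braid_img B j] = (c, l) with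
   phi_B(x_j) = c^{-1} x_l c. *)
Fixpoint braid_img (B : seq (nat * bool)) (j : nat) : fword * nat :=
  match B with
  | [::] => ([::], j)
  | g :: B' => subst_conj (sigma_img g.1 g.2) (braid_img B' j)
  end.

Definition braid_ok (n : nat) (B : seq (nat * bool)) : bool :=
  all (fun g : nat * bool => (g.1.+1 < n)%N) B.

(* Strand i (at the disk D) continues, after going once through the braid
   and the closure, as strand j. *)
Definition strand_next n (B : seq (nat * bool)) : rel 'I_n :=
  fun i j => (braid_img B i).2 == j.

(* comp i = index of the component K_{\{i\}} containing strand i. *)
Definition component_labeling n r (B : seq (nat * bool)) (comp : 'I_n -> 'I_r) : Prop :=
  (forall i j : 'I_n, comp i = comp j <-> connect (strand_next B) i j) /\
  (forall s, exists i, comp i = s).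

Section Eval.
Variables (k : fieldType) (n d : nat).

Definition extf T (x0 : T) (f : 'I_n -> T) (j : nat) : T :=
  match @insub nat (fun m => (m < n)%N) 'I_n j with Some i => f i | None => x0 end.

Definition eval_word (M : 'I_n -> 'M[k]_d) (w : fword) : 'M[k]_d :=
  foldr (fun p A => (if p.2 then invmx (extf 1%:M M p.1) else extf 1%:M M p.1) *m A)
        1%:M w.

(* Sheaf data (V = k^d, rho, stalks W_i at y_i seen inside V via the
   standard cords).  Linear maps act on row vectors on the right:
   M i = rho(m_i), the meridian of strand i at x_i.
   - rho is a representation of pi_L: the tuple (M i) is fixed by the
     Artin action of B (Wirtinger-type presentation of the closed braid);
   - W i has codimension one (T injective with 1-dim cokernel);
   - the meridian acts trivially on W i;
   - the stalks along a strand are transported consistently through the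
     braid (this also makes the longitude monodromy rho_s well defined as
     the restriction of rho(longitude) to W_s). *)
Definition sheaf_data (B : seq (nat * bool)) (M W : 'I_n -> 'M[k]_d) : Prop :=
  [/\ forall i : 'I_n, M i \in unitmx,
      forall i : 'I_n, let p := braid_img B i in
        M i = invmx (eval_word M p.1) *m extf 1%:M M p.2 *m eval_word M p.1,
      forall i : 'I_n, let p := braid_img B i in
        (W i == extf 0 W p.2 *m eval_word M p.1)%MS,
      forall i : 'I_n, (\rank (W i)).+1 = d
    & forall i : 'I_n, W i *m M i = W i].

(* A nonzero locally constant subsheaf k_X^U -> F (U = k^e.+1): an injective
   linear map U -> V landing in rho-invariants and in every stalk W_i. *)
Definition has_lc_subsheaf (M W : 'I_n -> 'M[k]_d) : Prop :=
  exists e (phi : 'M[k]_(e.+1, d)),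
    [/\ row_free phi, forall i : 'I_n, phi *m M i = phi & forall i : 'I_n, (phi <= W i)%MS].

(* A nonzero locally constant quotient F -> k_X^U: a rho-invariant linear map
   V -> U which is surjective on V and on every stalk W_i. *)
Definition has_lc_quotient (M W : 'I_n -> 'M[k]_d) : Prop :=
  exists e (phi : 'M[k]_(d, e.+1)),
    [/\ forall i : 'I_n, M i *m phi = phi, row_full phi
      & forall i : 'I_n, row_full (W i *m phi)].

(* A direct summand F2 of F (F = F1 (+) F2, i.e. V = V1 (+) V2 with both
   summands rho-stable and W_i = (W_i :&: V1) + (W_i :&: V2)) isomorphic to
   the kernel of a surjection k_X^U -> i'_* k_{L''} (U <> 0): rho acts
   trivially on V2, its stalk on K_s is a hyperplane of V2 (constant along
   K_s) for K_s in L'' and all of V2 otherwise. *)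
Definition has_kernel_summand r (comp : 'I_n -> 'I_r) (M W : 'I_n -> 'M[k]_d) : Prop :=
  exists (L2 : {set 'I_r}) (V1 V2 : 'M[k]_d),
    [/\ (V1 :&: V2 == (0 : 'M[k]_d))%MS, (V1 + V2 == 1%:M)%MS, (0 < \rank V2)%N,
        forall i : 'I_n, (V1 *m M i <= V1)%MS
      & forall i : 'I_n, V2 *m M i = V2] /\
    [/\
     forall i : 'I_n, (W i == (W i :&: V1) + (W i :&: V2))%MS,
        forall i : 'I_n, (if comp i \in L2 then (\rank (W i :&: V2)).+1 = \rank V2
                   else (V2 <= W i)%MS)
      & forall i j : 'I_n, comp i = comp j -> (W i :&: V2 == W j :&: V2)%MS].

Definition reduced r (comp : 'I_n -> 'I_r) (M W : 'I_n -> 'M[k]_d) : Prop :=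
  [/\ ~ has_lc_subsheaf M W, ~ has_lc_quotient M W & ~ has_kernel_summand comp M W].

(* Global sections Gamma(X, F): rho-invariant vectors lying in every stalk. *)
Definition global_sections (M W : 'I_n -> 'M[k]_d) : 'M[k]_d :=
  (\bigcap_i (W i :&: kermx (M i - 1%:M)))%MS.

Definition V0 (M : 'I_n -> 'M[k]_d) : 'M[k]_d := (\sum_i (1%:M - M i))%MS.

Definition stable (M W : 'I_n -> 'M[k]_d) : Prop :=
  (global_sections M W == (0 : 'M[k]_d))%MS /\ (V0 M == 1%:M)%MS.

(* Local trivialization: surjections f_i : V -> k (column vectors,
   v |-> v *m f i) with W_i contained in ker f_i. *)
Definition local_trivialization (W : 'I_n -> 'M[k]_d) (f : 'I_n -> 'cV[k]_d) : Prop :=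
  forall i : 'I_n, f i != 0 /\ W i *m f i = 0.

(* u j is a right inverse f_j^{-1} : k -> V of f_j. *)
Definition right_inverses (f : 'I_n -> 'cV[k]_d) (u : 'I_n -> 'rV[k]_d) : Prop :=
  forall j, u j *m f j = 1%:M.

(* R_ij = eps(gamma_ij) = f_i o (id - rho(m_j)) o f_j^{-1}. *)
Definition cord_matrix (M : 'I_n -> 'M[k]_d) (f : 'I_n -> 'cV[k]_d)
    (u : 'I_n -> 'rV[k]_d) : 'M[k]_n :=
  \matrix_(i, j) (u j *m (1%:M - M j) *m f i) 0 0.

End Eval.

(* Part (1): the meridians of the strands of one component are conjugate
   along the braid, so one trivial meridian makes all of them trivial, and a
   trivial meridian kills the corresponding column of cord values.
   Part (2): W_j is a hyperplane missing the right inverse u_j and fixed by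
   rho(m_j), so im(id - rho(m_j)) is spanned by u_j (id - rho(m_j)).  A zero
   row i therefore puts every im(id - rho(m_j)), hence V_0 = V, into ker f_i,
   contradicting the surjectivity of f_i. *)
From HB Require Import structures.
From mathcomp Require Import all_boot all_order all_algebra.
Set Implicit Arguments. Unset Strict Implicit. Unset Printing Implicit Defensive.
Import GRing.Theory.
Local Open Scope ring_scope.

Lemma extf_ord (T : Type) n (x0 : T) (g : 'I_n -> T) (j : 'I_n) :
  extf x0 g j = g j.
Proof. by rewrite /extf valK. Qed.

Lemma eval_word_unitmx (k : fieldType) n d (M : 'I_n -> 'M[k]_d) (w : fword) :
  (forall i, M i \in unitmx) -> eval_word M w \in unitmx.
Proof.
move=> M_unit; elim: w => [|[j inv] w IHw] /=; first exact: unitmx1.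
have ext_unit : extf 1%:M M j \in unitmx.
  by rewrite /extf; case: insubP => [i _ _|_]; [exact: M_unit | exact: unitmx1].
by rewrite unitmx_mul IHw andbT; case: inv; rewrite ?unitmx_inv.
Qed.

Lemma conjmx_eq1 (k : fieldType) d (A P : 'M[k]_d) :
  P \in unitmx -> (invmx P *m A *m P == 1%:M) = (A == 1%:M).
Proof.
move=> P_unit; apply/eqP/eqP => [conjA1|->]; last by rewrite mulmx1 mulVmx.
have -> : A = P *m (invmx P *m A *m P) *m invmx P.
  by rewrite !mulmxA mulmxV // mul1mx -mulmxA mulmxV // mulmx1.
by rewrite conjA1 mulmx1 mulmxV.
Qed.

Lemma hyperplane_addsmx_full (k : fieldType) d (H : 'M[k]_d) (v : 'rV[k]_d) :
  (\rank H).+1 = d -> ~~ (v <= H)%MS -> (1%:M <= H + v)%MS.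
Proof.
move=> rankH v_notin_H; apply: submx_full; rewrite -col_leq_rank.
have H_lt : (H < H + v)%MS by rewrite ltmxE addsmxSl /= addsmx_sub submx_refl.
by apply: leq_trans (rank_ltmx H_lt); rewrite rankH.
Qed.

Lemma fixed_hyperplane_image (k : fieldType) d (A H : 'M[k]_d) (v : 'rV[k]_d) :
  (1%:M <= H + v)%MS -> H *m A = H -> (1%:M - A <= v *m (1%:M - A))%MS.
Proof.
move=> H_v_full HA; have := submxMr (1%:M - A) H_v_full.
by rewrite mul1mx addsmxMr mulmxBr mulmx1 HA subrr adds0mx.
Qed.

Section CordMatrix.
Variables (k : fieldType) (n d : nat).
Variables (M W : 'I_n -> 'M[k]_d) (f : 'I_n -> 'cV[k]_d) (u : 'I_n -> 'rV[k]_d).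

Lemma meridian_eq1_on_component r (B : seq (nat * bool)) (comp : 'I_n -> 'I_r) :
  component_labeling B comp -> sheaf_data B M W ->
  forall i j, comp i = comp j -> M j = 1%:M -> M i = 1%:M.
Proof.
move=> [comp_connect _] [M_unit M_conj _ _ _] i j eq_comp /eqP Mj1; apply/eqP.
have closed_M1 : closed (strand_next B) [pred l | M l == 1%:M].
  move=> x y /eqP next_xy; rewrite !inE.
  by rewrite {1}(M_conj x) /= next_xy extf_ord conjmx_eq1 // eval_word_unitmx.
have := closed_connect closed_M1 (proj1 (comp_connect i j) eq_comp).
by rewrite !inE Mj1 => ->.
Qed.

Lemma col_cord_matrix_eq0 j : M j = 1%:M -> col j (cord_matrix M f u) = 0.
Proof.
move=> Mj1; apply/matrixP => a b.
by rewrite [LHS]mxE mxE Mj1 subrr mulmx0 mul0mx !mxE.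
Qed.

Lemma row_cord_matrix_eq0 i :
  row i (cord_matrix M f u) = 0 -> forall j, u j *m (1%:M - M j) *m f i = 0.
Proof.
move=> row_i0 j; apply/matrixP => a b; rewrite (ord1 a) (ord1 b).
by have /matrixP/(_ 0 j) := row_i0; rewrite !mxE.
Qed.

Lemma V0_kermx_eq0 (v : 'cV[k]_d) :
  (V0 M == 1%:M)%MS -> (forall j, (1%:M - M j) *m v = 0) -> v = 0.
Proof.
move=> /eqmxP V0_full kill_v.
have : (V0 M <= kermx v)%MS.
  by apply/sumsmx_subP => j _; apply/sub_kermxP; exact: kill_v.
by rewrite V0_full => /sub_kermxP; rewrite mul1mx.
Qed.

Lemma trivialization_not_submx j :
  local_trivialization W f -> right_inverses f u -> ~~ (u j <= W j)%MS.
Proof.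
move=> triv u_inv; apply/negP => /(submxMr (f j)).
rewrite u_inv (proj2 (triv j)) => /submx0null /matrixP /(_ 0 0).
by rewrite !mxE; apply/eqP; rewrite oner_eq0.
Qed.

End CordMatrix.

Theorem proposition4p10 (k : fieldType) (n r d : nat) (B : seq (nat * bool))
    (comp : 'I_n -> 'I_r) (M W : 'I_n -> 'M[k]_d)
    (f : 'I_n -> 'cV[k]_d) (u : 'I_n -> 'rV[k]_d) :
  braid_ok n B ->
  component_labeling B comp ->
  sheaf_data B M W ->
  reduced comp M W ->
  local_trivialization W f ->
  right_inverses f u ->
  (forall (s : 'I_r) (j0 : 'I_n), comp j0 = s -> M j0 = 1%:M ->
     forall j : 'I_n, comp j = s -> col j (cord_matrix M f u) = 0) /\
  (stable M W -> forall i : 'I_n, row i (cord_matrix M f u) != 0).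
Proof.
move=> _ labeling data _ triv u_inv; split.
  move=> s j0 <- Mj0 j comp_j; apply: col_cord_matrix_eq0.
  exact: meridian_eq1_on_component labeling data _ _ comp_j Mj0.
move=> [_ V0_full] i; apply/eqP => /row_cord_matrix_eq0 row_i0.
have [_ _ _ rankW WM] := data.
suff : f i = 0 by apply/eqP; case: (triv i).
apply: V0_kermx_eq0 V0_full _ => j; apply/sub_kermxP.
have image_j := fixed_hyperplane_image
  (hyperplane_addsmx_full (rankW j) (trivialization_not_submx j triv u_inv)) (WM j).
by apply: submx_trans image_j _; apply/sub_kermxP; rewrite row_i0.
Qed.
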